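(* Let $\hat\tau$ be a $\widehat{\mathbb{Z}}$-tropical type of genus $g$ inducing essential types. Then $$0\le k_{\hat\tau}\le\max(2g-1,0),\qquad\text{where } k_{\hat\tau}=b_1(\Gamma)+2\sum_{v\in V_+}g_v-|V_+|.$$
   Context: A $\widehat{\mathbb{Z}}$-tropical type $\hat\tau$ consists of a graph $\Gamma$ (vertices $V$, edges $E$, $n$ legs) with genera $g_v\ge0$ satisfying $\sum_vg_v+b_1(\Gamma)=g$, degrees $d_v\in\mathbb{Z}$, a partition $V=V_0\sqcup V_+$ into external and internal vertices, and slopes $m_{\vec e}=-m_{\overleftarrow e}\in\widehat{\mathbb{Z}}$ satisfying balancing $d_v=\sum_{e\ni v}m_{\vec e}+\sum_{\text{legs }i\text{ at }v}c_i$ in $\widehat{\mathbb{Z}}$ (for given coarse contact orders $c_i$). It induces essential types if every edge joins a vertex of $V_0$ to a vertex of $V_+$ and every $v\in V_+$ has $g_v>0$. *)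

From mathcomp Require Import all_boot all_order all_algebra.
Set Implicit Arguments. Unset Strict Implicit. Unset Printing Implicit Defensive.
Import Order.TTheory GRing.Theory Num.Theory.

(* Profinite integers  Zhat = lim_N Z/NZ, represented by compatible families
   of integer representatives: zh N is a lift of the N-th component. *)
Record Zhat := MkZhat {
  zh : nat -> int;
  zh_compat : forall M N : nat, (0 < M)%N -> (M %| N)%N ->
                (zh N = zh M %[mod M])%Z }.

Section Graphs.
Variables (V E : finType) (src tgt : E -> V).

Definition adj : rel V := fun x y =>
  [exists e : E, ((src e == x) && (tgt e == y)) || ((src e == y) && (tgt e == x))].

Definition graph_connected : Prop := forall x y : V, connect adj x y.

Definition betti1 : int :=
  (#|E|%:Z - #|V|%:Z + (n_comp (connect adj) (predT : {pred V}))%:Z)%R.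
End Graphs.

Definition k_tau (V E : finType) (src tgt : E -> V) (gv : V -> nat)
  (Vp : {set V}) : int :=
  (betti1 src tgt + 2%:Z * (\sum_(v in Vp) (gv v)%:Z) - #|Vp|%:Z)%R.

From mathcomp Require Import all_boot all_order all_algebra zify.
Import Order.TTheory GRing.Theory Num.Theory.
Set Implicit Arguments. Unset Strict Implicit. Unset Printing Implicit Defensive.

(* Every finite graph has b_1 >= 0: a breadth-first search from the root of
   each connected component gives every other vertex a distinct edge towards
   a vertex of smaller depth, so |V| <= |E| + #components.  With
   S = sum_{v in V_+} g_v, positivity of the internal genera gives
   |V_+| <= S, hence k >= 0; if V_+ is nonempty then
   k <= b_1 + 2 S - 1 <= 2 (b_1 + sum_v g_v) - 1 = 2 g - 1, and otherwise
   k = b_1 <= g. *)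

Lemma connect_connect (T : finType) (e : rel T) : connect (connect e) =2 connect e.
Proof.
move=> x y; apply/idP/idP; last exact: connect1.
by apply: connect_sub => {}x {}y.
Qed.

Lemma leq_card_witness (A B : finType) (P : A -> B -> bool) (D : {pred A}) :
    (forall x, x \in D -> exists y, P x y) ->
    {in D &, forall x x' y, P x y -> P x' y -> x = x'} ->
  (#|D| <= #|B|)%N.
Proof.
move=> exP uniqP; pose f x := [pick y | P x y].
have fP x : x \in D -> exists2 y, f x = Some y & P x y.
  move=> /exP[y Pxy]; rewrite /f; case: pickP => [z Pxz|noP]; first by exists z.
  by have := noP y; rewrite Pxy.
have f_inj : {in D &, injective f}.
  move=> x x' xD x'D.
  case: (fP x xD) => y -> Pxy; case: (fP x' x'D) => y' -> Px'y'.
  by case=> eq_yy'; apply: (uniqP x x' xD x'D y) => //; rewrite eq_yy'.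
rewrite -(card_in_imset f_inj).
suff /subset_leq_card : f @: D \subset [set~ None] by rewrite cardsC1 card_option.
by apply/subsetP => _ /imsetP[x /fP[y -> _] ->]; rewrite !inE.
Qed.

Section SpanningForest.
Variables (V E : finType) (src tgt : E -> V).
Local Notation adj := (adj src tgt).

Lemma adj_sym : symmetric adj.
Proof. by move=> x y; apply/existsP/existsP => -[e xy]; exists e; rewrite orbC. Qed.

Lemma connect_adj_sym : connect_sym adj.
Proof. exact: sym_connect_sym adj_sym. Qed.

Fixpoint ball (r : V) (k : nat) : {set V} :=
  if k is k.+1 then ball r k :|: [set y | [exists x in ball r k, adj x y]]
  else [set r].

Lemma ball_path r k x p :
  x \in ball r k -> path adj x p -> last x p \in ball r (k + size p).
Proof.
elim: p x k => [|y p IHp] x k /=; first by rewrite addn0.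
move=> x_in /andP[xy yp]; rewrite addnS -addSn; apply: IHp yp.
by rewrite inE; apply/orP; right; rewrite inE; apply/existsP; exists x; rewrite x_in.
Qed.

Lemma ball_connect r v : connect adj r v -> exists k, v \in ball r k.
Proof.
case/connectP=> p rp ->; exists (0 + size p); apply: ball_path rp.
by rewrite inE.
Qed.

Lemma connect_from_root v : connect adj (fingraph.root adj v) v.
Proof. by rewrite connect_adj_sym connect_root. Qed.

Definition depth (v : V) : nat := ex_minn (ball_connect (connect_from_root v)).

Lemma depthP v : v \in ball (fingraph.root adj v) (depth v).
Proof. by rewrite /depth; case: ex_minnP. Qed.

Lemma depth_min v k : v \in ball (fingraph.root adj v) k -> (depth v <= k)%N.
Proof. by rewrite /depth; case: ex_minnP => n _; apply. Qed.

Definition toward_root (v : V) (e : E) : bool :=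
  (src e == v) && (depth (tgt e) < depth v)%N
  || (tgt e == v) && (depth (src e) < depth v)%N.

Lemma toward_root_exists v : fingraph.root adj v != v -> exists e, toward_root v e.
Proof.
move=> not_root; have := depthP v; case def_k: (depth v) => [|k] /=.
  by rewrite inE eq_sym (negbTE not_root).
rewrite inE => /orP[v_in|].
  by have := depth_min v_in; rewrite def_k ltnn.
rewrite inE => /existsP[x /andP[x_in xv]].
have rx : fingraph.root adj x = fingraph.root adj v.
  by apply/(fingraph.rootP connect_adj_sym)/connect1.
rewrite -rx in x_in; have lt_x := depth_min x_in.
case/existsP: xv => e /orP[]/andP[/eqP sx /eqP tx]; exists e;
  by rewrite /toward_root sx tx def_k eqxx !ltnS lt_x ?orbT.
Qed.

Lemma toward_root_inj v w e : toward_root v e -> toward_root w e -> v = w.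
Proof.
rewrite /toward_root.
by case/orP=> /andP[/eqP <- lt_v]; case/orP=> /andP[/eqP <- lt_w] //;
  have := ltn_trans lt_v lt_w; rewrite ltnn.
Qed.

Lemma card_le_edges_add_comp : (#|V| <= #|E| + n_comp adj (predT : {pred V}))%N.
Proof.
have nonroots : (#|[predC roots adj]| <= #|E|)%N.
  apply: (leq_card_witness (P := toward_root)) => [v|v w _ _ e].
    by rewrite inE => /toward_root_exists.
  exact: toward_root_inj.
rewrite -(cardC (roots adj)) addnC leq_add // eq_leq //.
by apply: eq_card => v; rewrite !inE andbT.
Qed.

End SpanningForest.

Lemma betti1_ge0 (V E : finType) (src tgt : E -> V) : (0 <= betti1 src tgt)%R.
Proof.
rewrite /betti1 (eq_n_comp (connect_connect (adj src tgt))).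
have := card_le_edges_add_comp src tgt; lia.
Qed.

Lemma card_le_sum_pos (T : finType) (A : {pred T}) (f : T -> nat) :
  {in A, forall x, 0 < f x}%N -> (#|A| <= \sum_(x in A) f x)%N.
Proof. by move=> f_gt0; rewrite -sum1_card; apply: leq_sum. Qed.

Lemma Posz_sum (I : finType) (P : pred I) (f : I -> nat) :
  ((\sum_(i | P i) f i)%N%:Z = \sum_(i | P i) (f i)%:Z)%R.
Proof. exact: (big_morph Posz PoszD). Qed.

(* [m e] is the slope of [e] oriented from [src e] to [tgt e]. *)
Theorem lemma3p5p5 (g n : nat) (V E : finType) (src tgt : E -> V)
  (legs : 'I_n -> V) (c : 'I_n -> int) (gv : V -> nat) (d : V -> int)
  (Vp : {set V}) (m : E -> Zhat)
  (Hconn : graph_connected src tgt)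
  (Hgenus : ((\sum_(v : V) (gv v)%:Z) + betti1 src tgt = g%:Z)%R)
  (Hbal : forall (v : V) (N : nat), (0 < N)%N ->
     (d v = (\sum_(e : E | src e == v) zh (m e) N)
            - (\sum_(e : E | tgt e == v) zh (m e) N)
            + (\sum_(i : 'I_n | legs i == v) c i) %[mod N])%Z)
  (Hess_edges : forall e : E, (src e \in Vp) != (tgt e \in Vp))
  (Hess_genus : forall v : V, v \in Vp -> (0 < gv v)%N) :
  (0 <= k_tau src tgt gv Vp /\
   k_tau src tgt gv Vp <= Num.max (2 * g%:Z - 1) 0)%R.
Proof.
have b_ge0 := betti1_ge0 src tgt.
have card_le_S : (#|Vp| <= \sum_(v in Vp) gv v)%N.
  by apply: card_le_sum_pos => v /Hess_genus.
have S_le_T : (\sum_(v in Vp) gv v <= \sum_v gv v)%N.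
  by rewrite [leqRHS](bigID (mem Vp)) leq_addr.
have S0_or_Vp_gt0 : \sum_(v in Vp) gv v = 0%N \/ (0 < #|Vp|)%N.
  by case: (posnP #|Vp|) => [/card0_eq Vp0|]; [left; apply: big_pred0 | right].
move: Hgenus; rewrite /k_tau -!Posz_sum le_max.
case: S0_or_Vp_gt0 => [S0|Vp_gt0]; lia.
Qed.
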